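(* Let $D$ be a consistent domain, let $(M,s)$ be a state, let $a$ be a world-altering action that is executable in $(M,s)$, and let $\Phi^w_D(a,(M,s))=\{(M',s')\}$. Then: (1) for every world $r(a,u)\in M'[S]\setminus M[S]$ and every literal $\ell\in e_D(a,M,u)$, we have $(M',r(a,u))\models \ell$; (2) for every world $r(a,u)\in M'[S]\setminus M[S]$ and every fluent $f\in\mathcal F$ such that neither $f$ nor $\neg f$ belongs to $e_D(a,M,u)$, we have $(M,u)\models f$ iff $(M',r(a,u))\models f$; (3) for every agent $i\in O_D(a,M,s)$ and every belief formula $\varphi$, $(M',s')\models \mathbf B_i\varphi$ iff $(M,s)\models\mathbf B_i\varphi$.
   Context: Fix a finite set of agents $\mathcal{AG}=\{1,\dots,n\}$, a set $\mathcal F$ of fluents (propositional variables) and a set of actions. Fluent formulae are propositional formulae over $\mathcal F$; a fluent literal is $f$ or $\neg f$ for $f\in\mathcal F$. Belief formulae are built from fluent formulae using $\mathbf B_i\varphi$ ($i\in\mathcal{AG}$), the Boolean connectives, and $\mathbf E_\alpha\varphi$, $\mathbf C_\alpha\varphi$ for nonempty $\alpha\subseteq\mathcal{AG}$. A Kripke structure $M=\langle S,\pi,\mathcal B_1,\dots,\mathcal B_n\rangle$ has a set of worlds $M[S]=S$, an interpretation $M[\pi](u)\subseteq\mathcal F$ of each world, and relations $M[i]=\mathcal B_i\subseteq S\times S$. A state is a pair $(M,s)$ with $s\in M[S]$. Satisfaction: $(M,s)\models\varphi$ for a fluent formula iff $M[\pi](s)\models\varphi$; $(M,s)\models\mathbf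 B_i\varphi$ iff $(M,t)\models\varphi$ for all $t$ with $(s,t)\in M[i]$; Boolean connectives as usual; $\mathbf E_\alpha\varphi$ holds iff $\mathbf B_i\varphi$ holds for all $i\in\alpha$; $\mathbf C_\alpha\varphi$ holds iff $\mathbf E^k_\alpha\varphi$ holds for all $k\ge0$, where $\mathbf E^0_\alpha\varphi=\varphi$, $\mathbf E^{k+1}_\alpha\varphi=\mathbf E_\alpha\mathbf E^k_\alpha\varphi$. A domain $D$ consists of: for each action $a$ exactly one statement ''executable $a$ if $\psi$'' ($\psi$ a belief formula; $a$ is executable in $(M,s)$ iff $(M,s)\models\psi$); for world-altering actions, statements ''$a$ causes $\ell$ if $\varphi$'' ($\ell$ a fluent literal, $\varphi$ a belief formula); and observability statements ''$X$ observes $a$ if $\varphi$'' and ''$X$ aware\_of $a$ if $\varphi$'' ($X$ an agent, $\varphi$ a fluent formula). $F_D(a,M,s)$ is the set of agents $X$ with some statement ''$X$ observes $a$ if $\varphi$'' in $D$ and $(M,s)\models\varphi$; $P_D(a,M,s)$ is defined likewise with ''aware\_of''; $O_D(a,M,s)=\mathcal{AG}\setminus(F_D(a,M,s)\cup P_D(a,M,s))$. For a world-altering action $a$ and $u\in M[S]$, $e_D(a,M,u)=\{\ell\mid$ ''$a$ causes $\ell$ if $\varphi$'' $\in D$ and $(M,u)\models\varphi\}$. $D$ is consistent if $F_D(a,M,s)\cap P_D(a,M,s)=\emptyset$ always and every $e_D(a,M,u)$ is a consistent set of literals. Transition $\Phi^w_D$: if $a$ is executable in $(M,s)$, $\Phi^w_D(a,(M,s))=\{(M',s')\}$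 where: for every $u\in M[S]$ such that $a$ is executable in $(M,u)$ a fresh world $r(a,u)$ is created whose interpretation is obtained from $M[\pi](u)$ by making every literal of $e_D(a,M,u)$ true and leaving all other fluents unchanged; $M'[S]=M[S]\cup\{r(a,u)\}$; worlds of $M[S]$ keep their interpretations; $M'[i]$ contains $M[i]$; for $i\in F_D(a,M,s)$, $M'[i]$ additionally contains $(r(a,u),r(a,v))$ whenever $(u,v)\in M[i]$ and both $r(a,u),r(a,v)$ exist; for $i\in O_D(a,M,s)$, $M'[i]$ additionally contains $(r(a,u),v)$ whenever $r(a,u)$ exists and $(u,v)\in M[i]$; no other pairs; and $s'=r(a,s)$. *)

From mathcomp Require Import all_boot.
From Stdlib Require Import List.

Set Implicit Arguments.
Unset Strict Implicit.
Unset Printing Implicit Defensive.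

Section MAS.
Variables (Ag F : finType) (Act : Type).

Inductive fform : Type :=
| FAtom of F
| FTrue | FFalse
| FNot of fform
| FAnd of fform & fform
| FOr of fform & fform
| FImp of fform & fform.

Inductive lit : Type := Pos of F | Neg of F.

Definition lit_form (l : lit) : fform :=
  match l with Pos f => FAtom f | Neg f => FNot (FAtom f) end.

Inductive bform : Type :=
| BFl of fform
| BB of Ag & bform
| BNot of bform
| BAnd of bform & bform
| BOr of bform & bform
| BImp of bform & bform
| BE of {set Ag} & bform
| BC of {set Ag} & bform.

Fixpoint bwf (p : bform) : Prop :=
  match p with
  | BFl _ => True
  | BB _ q | BNot q => bwf q
  | BAnd q r | BOr q r | BImp q r => bwf q /\ bwf r
  | BE A q | BC A q => A != set0 /\ bwf q
  end.

(* Kripke structure over a carrier type W of potential worlds: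
   kS = the set of worlds M[S], kpi u = the set of fluents true at u,
   krel i = the relation M[i]. *)
Record kripke (W : Type) := Kripke {
  kS : W -> Prop;
  kpi : W -> F -> Prop;
  krel : Ag -> W -> W -> Prop }.

Definition kwf W (M : kripke W) : Prop :=
  forall i u v, krel M i u v -> kS M u /\ kS M v.

Fixpoint fsat (v : F -> Prop) (p : fform) : Prop :=
  match p with
  | FAtom f => v f
  | FTrue => True
  | FFalse => False
  | FNot q => ~ fsat v q
  | FAnd q r => fsat v q /\ fsat v r
  | FOr q r => fsat v q \/ fsat v r
  | FImp q r => fsat v q -> fsat v r
  end.

(* (M,s) |= phi ; E^k_alpha phi unfolded: E_alpha psi holds at s iff
   psi holds at every t with (s,t) in M[i] for some i in alpha. *)
Fixpoint sat W (M : kripke W) (s : W) (p : bform) {struct p} : Prop :=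
  match p with
  | BFl q => fsat (kpi M s) q
  | BB i q => forall t, krel M i s t -> sat M t q
  | BNot q => ~ sat M s q
  | BAnd q r => sat M s q /\ sat M s r
  | BOr q r => sat M s q \/ sat M s r
  | BImp q r => sat M s q -> sat M s r
  | BE A q => forall i, i \in A -> forall t, krel M i s t -> sat M t q
  | BC A q =>
      let fix Ek (k : nat) (x : W) {struct k} : Prop :=
        match k with
        | 0 => sat M x q
        | k'.+1 => forall i, i \in A -> forall t, krel M i x t -> Ek k' t
        end in
      forall k, Ek k s
  end.

(* An action domain: the (unique) executability condition of each action,
   the set of world-altering actions, and finite lists of
   "a causes l if phi", "X observes a if phi", "X aware_of a if phi". *)
Record domain := Domain {
  d_exec : Act -> bform;
  d_wa : Act -> Prop;
  d_causes : list (Act * lit * bform);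
  d_observes : list (Ag * Act * fform);
  d_aware : list (Ag * Act * fform) }.

Variable D : domain.

Definition executable W (a : Act) (M : kripke W) (s : W) : Prop :=
  sat M s (d_exec D a).

Definition FD W (a : Act) (M : kripke W) (s : W) (X : Ag) : Prop :=
  exists p, In (X, a, p) (d_observes D) /\ fsat (kpi M s) p.

Definition PD W (a : Act) (M : kripke W) (s : W) (X : Ag) : Prop :=
  exists p, In (X, a, p) (d_aware D) /\ fsat (kpi M s) p.

Definition OD W (a : Act) (M : kripke W) (s : W) (X : Ag) : Prop :=
  ~ FD a M s X /\ ~ PD a M s X.

Definition eD W (a : Act) (M : kripke W) (u : W) (l : lit) : Prop :=
  exists p, In (a, l, p) (d_causes D) /\ sat M u p.

Definition consistent_domain : Prop :=
  forall (W : Type) (M : kripke W), kwf M ->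
    (forall a s, kS M s -> forall X, ~ (FD a M s X /\ PD a M s X)) /\
    (forall a u, kS M u -> forall f, ~ (eD a M u (Pos f) /\ eD a M u (Neg f))).

(* The transition Phi^w_D.  Worlds of M' live in W + W: inl u is the old
   world u, inr u is the fresh world r(a,u). *)
Definition trans_model W (a : Act) (M : kripke W) (s : W) : kripke (W + W) :=
  {| kS := fun x => match x with
                    | inl u => kS M u
                    | inr u => kS M u /\ executable a M u
                    end;
     kpi := fun x f => match x with
                       | inl u => kpi M u f
                       | inr u => eD a M u (Pos f) \/
                                  (kpi M u f /\ ~ eD a M u (Neg f))
                       end;
     krel := fun i x y => match x, y with
                          | inl u, inl v => krel M i u v
                          | inr u, inr v =>
                              FD a M s i /\ krel M i u v /\
                              (kS M u /\ executable a M u) /\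
                              (kS M v /\ executable a M v)
                          | inr u, inl v =>
                              OD a M s i /\ krel M i u v /\
                              (kS M u /\ executable a M u)
                          | inl _, inr _ => False
                          end |}.

Definition PhiW W (a : Act) (M : kripke W) (s : W) : kripke (W + W) * (W + W) :=
  (trans_model a M s, inr s).

End MAS.

(** Old worlds keep their valuation and have no edges into fresh worlds, so
    [inl] is a bounded morphism from [M] into the updated model and every old
    world satisfies the same formulae as before.  An oblivious agent's edges
    out of the fresh world [r(a,s)] lead exactly to the old worlds it
    considered possible at [s], hence its beliefs at [s'] are those at [s].
    Effects hold at fresh worlds because a consistent domain never causes
    both [f] and [~f]; all other fluents are inert. *)

From mathcomp Require Import all_boot.

Set Implicit Arguments.
Unset Strict Implicit.
Unset Printing Implicit Defensive.

(** [iterE M A P k x] is [E^k_A P] at [x]; it is literally the auxiliary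
    fixpoint in the [BC] clause of [sat]. *)
Definition iterE (Ag F : finType) W (M : kripke Ag F W) (A : {set Ag})
    (P : W -> Prop) : nat -> W -> Prop :=
  fix Ek (k : nat) (x : W) {struct k} : Prop :=
    match k with
    | 0 => P x
    | k'.+1 => forall i, i \in A -> forall t, krel M i x t -> Ek k' t
    end.

Lemma sat_BC (Ag F : finType) W (M : kripke Ag F W) (A : {set Ag})
    (q : bform Ag F) (x : W) :
  sat M x (BC A q) <-> forall k, iterE M A (fun y => sat M y q) k x.
Proof. reflexivity. Qed.

Section BoundedMorphism.
Variables (Ag F : finType) (W V : Type).
Variables (M : kripke Ag F W) (N : kripke Ag F V) (h : W -> V).
Hypothesis kpi_morph : forall u, kpi N (h u) = kpi M u.
Hypothesis krel_forth : forall i u v, krel M i u v -> krel N i (h u) (h v).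
Hypothesis krel_back :
  forall i u y, krel N i (h u) y -> exists2 v, y = h v & krel M i u v.

Lemma box_morph (i : Ag) (P : W -> Prop) (Q : V -> Prop) (u : W) :
  (forall v, Q (h v) <-> P v) ->
  (forall y, krel N i (h u) y -> Q y) <-> (forall v, krel M i u v -> P v).
Proof.
move=> QP; split=> Hbox.
- by move=> v uv; apply/QP/Hbox/krel_forth.
- by move=> y /krel_back[v -> uv]; apply/QP/Hbox.
Qed.

Lemma iterE_morph (A : {set Ag}) (P : W -> Prop) (Q : V -> Prop) :
  (forall v, Q (h v) <-> P v) ->
  forall k u, iterE N A Q k (h u) <-> iterE M A P k u.
Proof.
move=> QP; elim=> [|k IHk] u //=.
split=> Hk i iA.
- exact: (box_morph i u IHk).1 (Hk i iA).
- exact: (box_morph i u IHk).2 (Hk i iA).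
Qed.

Lemma sat_morph (p : bform Ag F) (u : W) : sat N (h u) p <-> sat M u p.
Proof.
elim: p u => [q|i q IH|q IH|q IHq r IHr|q IHq r IHr|q IHq r IHr|A q IH|A q IH] u.
- by rewrite /= kpi_morph.
- exact: (@box_morph i _ (sat N ^~ q) u IH).
- by have := IH u; rewrite /=; tauto.
- by have := IHq u; have := IHr u; rewrite /=; tauto.
- by have := IHq u; have := IHr u; rewrite /=; tauto.
- by have := IHq u; have := IHr u; rewrite /=; tauto.
- split=> HE i iA.
  + exact: (@box_morph i _ (sat N ^~ q) u IH).1 (HE i iA).
  + exact: (@box_morph i _ (sat N ^~ q) u IH).2 (HE i iA).
- rewrite !sat_BC; split=> HC k.
  + exact: (@iterE_morph A _ (sat N ^~ q) IH k u).1 (HC k).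
  + exact: (@iterE_morph A _ (sat N ^~ q) IH k u).2 (HC k).
Qed.

End BoundedMorphism.

Section WorldAlteringUpdate.
Variables (Ag F : finType) (Act : Type) (D : domain Ag F Act).
Variables (W : Type) (M : kripke Ag F W) (s : W) (a : Act).

Local Notation M' := (trans_model D a M s).

Lemma sat_trans_model_old (p : bform Ag F) (u : W) : sat M' (inl u) p <-> sat M u p.
Proof.
apply: sat_morph => // i u' [v|v] //= uv.
by exists v.
Qed.

Lemma krel_trans_model_oblivious (i : Ag) (u : W) :
  OD D a M s i -> kS M u -> executable D a M u ->
  forall y, krel M' i (inr u) y <-> exists2 v, y = inl v & krel M i u v.
Proof.
move=> iO uS uX [v|v] /=.
- by split=> [[_ [uv _]]|[_ [<-] uv]]; [exists v | split].
- by split=> [[iF _]|[]] //; case: iO.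
Qed.

Lemma sat_trans_model_effect (u : W) (l : lit F) :
  (forall f, ~ (eD D a M u (Pos f) /\ eD D a M u (Neg f))) ->
  eD D a M u l -> sat M' (inr u) (BFl Ag (lit_form l)).
Proof.
move=> noclash; case: l => f ul /=; first by left.
by case=> [uPos|[_ /(_ ul)]] //; apply: (noclash f).
Qed.

Lemma sat_trans_model_inertia (u : W) (f : F) :
  ~ eD D a M u (Pos f) -> ~ eD D a M u (Neg f) ->
  sat M u (BFl Ag (FAtom f)) <-> sat M' (inr u) (BFl Ag (FAtom f)).
Proof. by move=> noPos noNeg /=; split=> [|[/noPos|[]]] //; right. Qed.

End WorldAlteringUpdate.

Theorem proposition2 (Ag F : finType) (Act : Type) (D : domain Ag F Act)
  (W : Type) (M : kripke Ag F W) (s : W) (a : Act)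
  (M' : kripke Ag F (W + W)) (s' : W + W) :
  consistent_domain D ->
  kwf M -> kS M s ->
  d_wa D a -> executable D a M s ->
  PhiW D a M s = (M', s') ->
  (* (1) *)
  (forall u : W, kS M' (inr u) ->
     forall l, eD D a M u l -> sat M' (inr u) (BFl Ag (lit_form l))) /\
  (* (2) *)
  (forall u : W, kS M' (inr u) ->
     forall f : F, ~ eD D a M u (Pos f) -> ~ eD D a M u (Neg f) ->
       (sat M u (BFl Ag (FAtom f)) <-> sat M' (inr u) (BFl Ag (FAtom f)))) /\
  (* (3) *)
  (forall i : Ag, OD D a M s i ->
     forall phi : bform Ag F, bwf phi ->
       (sat M' s' (BB i phi) <-> sat M s (BB i phi))).
Proof.
move=> consD Mwf sS _ sX [<- <-].
have [_ noclash] := consD W M Mwf.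
split; [|split].
- by move=> u [uS _] l; apply: sat_trans_model_effect => f; apply: noclash.
- by move=> u _ f; apply: sat_trans_model_inertia.
- move=> i iO phi _.
  have succ_s := krel_trans_model_oblivious iO sS sX.
  split=> Hbox v.
  + by move=> sv; apply/sat_trans_model_old/Hbox/succ_s; exists v.
  + by move=> /succ_s[v' -> sv']; apply/sat_trans_model_old/Hbox.
Qed.
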